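(* For every integer $n\ge 3$, $g(n,3) \ge n/6$.
   Context: For integers $2\le k\le n$, let $S_n$ denote the set of permutations of $[n]=\{1,\dots,n\}$ (written as sequences), and $S_{n,k}$ the set of all sequences of $k$ distinct elements of $[n]$. A sequence $\kappa\in S_{n,k}$ is a subsequence of a permutation $\pi\in S_n$ if its elements appear in $\pi$ in the same relative order as in $\kappa$. A perfect sequence covering array ${\rm PSCA}(n,k)$ with multiplicity $\lambda$ (a positive integer) is a multiset $X$ of elements of $S_n$ such that every $\kappa\in S_{n,k}$ is a subsequence of exactly $\lambda$ elements of $X$ (counted with multiplicity); such an $X$ has size $\lambda k!$. $g(n,k)$ denotes the smallest $\lambda$ for which a ${\rm PSCA}(n,k)$ with multiplicity $\lambda$ exists. *)

From mathcomp Require Import all_boot all_fingroup.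
Set Implicit Arguments. Unset Strict Implicit. Unset Printing Implicit Defensive.

Definition perm_seq (n : nat) (p : 'S_n) : seq 'I_n := [seq p i | i <- enum 'I_n].

Definition is_subseq_of_perm (n k : nat) (kappa : k.-tuple 'I_n) (p : 'S_n) : bool :=
  subseq kappa (perm_seq p).

(* X (a multiset of permutations, represented as a list) is a PSCA(n,k) with
   multiplicity lam: lam is positive and every kappa in S_{n,k} is a
   subsequence of exactly lam elements of X, counted with multiplicity. *)
Definition is_PSCA (n k : nat) (X : seq 'S_n) (lam : nat) : Prop :=
  0 < lam /\
  forall kappa : k.-tuple 'I_n, uniq kappa ->
    count (is_subseq_of_perm kappa) X = lam.

From mathcomp Require Import all_boot all_fingroup all_algebra.
From mathcomp Require Import ring zify.
Set Implicit Arguments. Unset Strict Implicit. Unset Printing Implicit Defensive.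
Import GRing.Theory Num.Theory.

(* Fix a point z and give every x the sign vector s_x over X, with s_x(p) = 1
   if x precedes z in p and -1 otherwise (and s_z = 1).  Since each of the six
   relative orders of three distinct points occurs in exactly lam members of X,
   the Gram matrix of the s_x is 4 lam I + 2 lam M, where M_xy = 1 iff x and y
   are both z or both not z.  This matrix is nonsingular, so the n vectors s_x
   are independent in a space of dimension |X| = 6 lam. *)

Lemma subseq3_enum n (i j k : 'I_n) :
  subseq [:: i; j; k] (enum 'I_n) = (i < j) && (j < k).
Proof.
have srt : sorted (fun x y : 'I_n => x < y) (enum 'I_n).
  by have := iota_ltn_sorted 0 n; rewrite -val_enum_ord sorted_map.
have tr : transitive (fun x y : 'I_n => x < y) by move=> ? ? ?; apply: ltn_trans.
apply/idP/idP.
  by move=> H; have := subseq_sorted tr H srt; rewrite /= andbT.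
move=> /andP[hij hjk]; apply/subseq_uniqP; first exact: enum_uniq.
apply: (irr_sorted_eq tr) => //.
- by move=> x; rewrite /= ltnn.
- by rewrite /= hij hjk.
- exact: sorted_filter.
- by move=> x; rewrite mem_filter mem_enum andbT.
Qed.

Definition position n (p : 'S_n) (x : 'I_n) : nat := (p^-1)%g x.

Lemma subseq3_perm_seq n (p : 'S_n) (a b c : 'I_n) :
  subseq [:: a; b; c] (perm_seq p) =
    (position p a < position p b) && (position p b < position p c).
Proof.
rewrite /position -subseq3_enum /perm_seq; apply/idP/idP.
  move=> /(map_subseq (p^-1)%g) /=.
  by rewrite -map_comp (eq_map (permK p)) map_id.
by move=> /(map_subseq p) /=; rewrite !permKV.
Qed.

Lemma position_inj n (p : 'S_n) : injective (position p).
Proof. by move=> x y /val_inj/perm_inj. Qed.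

Lemma exists_third n (x y : 'I_n) : 3 <= n -> exists c : 'I_n, (c != x) && (c != y).
Proof.
move=> n_ge3; apply/existsP; apply: contraT => /existsPn none_else.
have : #|'I_n| <= #|[set x; y]|.
  apply: subset_leq_card; apply/subsetP => c _.
  by move: (none_else c); rewrite !inE negb_and !negbK.
rewrite card_ord cards2; case: (x != y) => /=; lia.
Qed.

Local Open Scope ring_scope.

Lemma row_free_scalar_add_fibers (R : numFieldType) (T : eqType) n
    (f : 'I_n -> T) (a b : R) : 0 < a -> 0 <= b ->
  row_free (\matrix_(x, y) (a * (x == y)%:R + b * (f x == f y)%:R) : 'M[R]_n).
Proof.
move=> a_gt0 b_ge0; apply: inj_row_free => v vA0.
pose S c := \sum_(x | f x == c) v 0 x.
have rowE y : a * v 0 y + b * S (f y) = 0.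
  have /matrixP/(_ 0 y) := vA0; rewrite !mxE => <-.
  under eq_bigr => x _ do rewrite mxE mulrDr.
  rewrite big_split /= (bigD1 y) //= big1 => [|x /negbTE->]; last by rewrite !mulr0.
  rewrite eqxx addr0 mulr1 mulrC /S mulr_sumr big_mkcond /=.
  by congr (_ + _); apply: eq_bigr => x _; case: eqP; rewrite ?mulr1 ?mulr0 // mulrC.
have S0 c : S c = 0.
  have : \sum_(y | f y == c) (a * v 0 y + b * S c) = 0.
    by rewrite big1 // => y /eqP <-; exact: rowE.
  rewrite big_split /= -mulr_sumr sumr_const -/(S c) -mulr_natr mulrAC -mulrDl.
  move/eqP; rewrite mulf_eq0 => /orP[|/eqP//].
  by rewrite (negbTE (lt0r_neq0 _)) // ltr_pwDl // mulr_ge0.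
apply/rowP => y; have := rowE y; rewrite S0 mulr0 addr0 mxE => /eqP.
by rewrite mulf_eq0 (negbTE (lt0r_neq0 a_gt0)) => /eqP.
Qed.

Lemma comparisons_by_order (R : comNzRingType) (i j k : nat)
    (G : bool -> bool -> bool -> R) : i != j -> j != k -> i != k ->
  G (i < j)%N (j < k)%N (i < k)%N =
    ((i < j)%N && (j < k)%N)%:R * G true true true
  + ((i < k)%N && (k < j)%N)%:R * G true false true
  + ((j < i)%N && (i < k)%N)%:R * G false true true
  + ((j < k)%N && (k < i)%N)%:R * G false true false
  + ((k < i)%N && (i < j)%N)%:R * G true false false
  + ((k < j)%N && (j < i)%N)%:R * G false false false.
Proof.
move=> ij jk ik.
case: (ltngtP i j) ij => // hij _; case: (ltngtP j k) jk => // hjk _;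
  case: (ltngtP i k) ik => // hik _ /=; try (exfalso; lia); ring.
Qed.

Lemma sumr_count (R : pzSemiRingType) (T : Type) (s : seq T) (P : pred T) :
  \sum_(p <- s) (P p)%:R = (count P s)%:R :> R.
Proof.
by rewrite -sum1_count natr_sum [RHS]big_mkcond; apply: eq_bigr => p _; case: (P p).
Qed.

Lemma sumr1_size (R : pzSemiRingType) (T : Type) (s : seq T) :
  \sum_(p <- s) 1 = (size s)%:R :> R.
Proof. by rewrite -sum1_size natr_sum. Qed.

Section PSCA3.

Variables (n : nat) (X : seq 'S_n) (lam : nat).
Hypothesis X_PSCA : is_PSCA 3 X lam.

Lemma count_PSCA3 (a b c : 'I_n) : a != b -> b != c -> a != c ->
  count (fun p => (position p a < position p b)%N && (position p b < position p c)%N)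
        X = lam.
Proof.
move=> ab bc ac; case: X_PSCA => _ /(_ [tuple a; b; c]) <-; last first.
  by rewrite /= !inE negb_or ab ac bc.
by apply: eq_count => p; rewrite /is_subseq_of_perm subseq3_perm_seq.
Qed.

Lemma sum_PSCA3 (a b c : 'I_n) (G : bool -> bool -> bool -> rat) :
  a != b -> b != c -> a != c ->
  \sum_(p <- X) G (position p a < position p b)%N (position p b < position p c)%N
                  (position p a < position p c)%N =
  lam%:R * (G true true true + G true false true + G false true true
          + G false true false + G true false false + G false false false).
Proof.
move=> ab bc ac.
have pne (x y : 'I_n) (p : 'S_n) : x != y -> position p x != position p y.
  by apply: contra => /eqP/position_inj ->.
under eq_bigr => p _ do rewrite (comparisons_by_order G (pne _ _ p ab) (pne _ _ p bc)
  (pne _ _ p ac)).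
rewrite !big_split /= -!mulr_suml !sumr_count.
have ba : b != a by rewrite eq_sym.
have cb : c != b by rewrite eq_sym.
have ca : c != a by rewrite eq_sym.
rewrite (count_PSCA3 ab bc ac) (count_PSCA3 ac cb ab) (count_PSCA3 ba ac bc)
  (count_PSCA3 bc ca ba) (count_PSCA3 ca ab cb) (count_PSCA3 cb ba ca); ring.
Qed.

Hypothesis n_ge3 : (3 <= n)%N.

Lemma size_PSCA3 : size X = (6 * lam)%N.
Proof.
have x0 : 'I_n := Ordinal (ltnW (ltnW n_ge3)).
have [c1 /andP[c1x0 _]] := exists_third x0 x0 n_ge3.
have [c2 /andP[c2x0 c2c1]] := exists_third x0 c1 n_ge3.
rewrite eq_sym in c2x0; rewrite eq_sym in c2c1.
have /eqP := sum_PSCA3 (fun _ _ _ => 1) c1x0 c2x0 c2c1.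
have -> : lam%:R * (1 + 1 + 1 + 1 + 1 + 1) = (6 * lam)%:R :> rat.
  by rewrite natrM; ring.
by rewrite sumr1_size eqr_nat => /eqP.
Qed.

Variable z : 'I_n.

Definition side (x : 'I_n) (p : 'S_n) : rat :=
  if x == z then 1 else if (position p x < position p z)%N then 1 else -1.

Lemma sum_side x : x != z -> \sum_(p <- X) side x p = 0.
Proof.
move=> xz; have [c /andP[cx cz]] := exists_third x z n_ge3.
rewrite eq_sym in cx; rewrite eq_sym in cz.
have := sum_PSCA3 (fun u _ _ => if u then 1 else -1) xz cz cx.
rewrite /side (negbTE xz) /= => ->; ring.
Qed.

Lemma sum_side_mul x y : x != z -> y != z -> x != y ->
  \sum_(p <- X) side x p * side y p = 2 * lam%:R.
Proof.
move=> xz yz xy.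
have := sum_PSCA3 (fun _ v w => (if w then 1 else -1) * (if v then 1 else -1)) xy yz xz.
rewrite /side (negbTE xz) (negbTE yz) /= => ->; ring.
Qed.

Lemma gram_side x y :
  \sum_(p <- X) side x p * side y p =
    4 * lam%:R * (x == y)%:R + 2 * lam%:R * ((x == z) == (y == z))%:R.
Proof.
have [<-|xy] := eqVneq x y.
  have side_sq p : side x p * side x p = 1.
    by rewrite /side; case: (x == z); case: (_ < _)%N; rewrite ?mulr1 ?mulrNN.
  rewrite (eq_bigr _ (fun p _ => side_sq p)) sumr1_size size_PSCA3.
  by rewrite !eqxx natrM /=; ring.
have [xz|xz] := eqVneq x z.
  subst x; rewrite eq_sym in xy; rewrite (negbTE xy).
  rewrite (eq_bigr (side y)) ?sum_side //=; first ring.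
  by move=> p _; rewrite /side eqxx mul1r.
have [yz|yz] := eqVneq y z.
  subst y; rewrite (eq_bigr (side x)) ?sum_side //=; first ring.
  by move=> p _; rewrite /side eqxx mulr1.
by rewrite sum_side_mul //=; ring.
Qed.

End PSCA3.

Local Close Scope ring_scope.

Theorem lemma3p1 (n : nat) (hn : 3 <= n) (X : seq 'S_n) (lam : nat) :
  is_PSCA 3 X lam -> n <= 6 * lam.
Proof.
move=> X_PSCA; have z : 'I_n := Ordinal (ltnW (ltnW hn)).
pose A : 'M[rat]_(n, size X) := (\matrix_(x, j) side z x (nth 1%g X j))%R.
have gramA : (A *m A^T = \matrix_(x, y)
    (4 * lam%:R * (x == y)%:R + 2 * lam%:R * ((x == z) == (y == z))%:R))%R.
  apply/matrixP => x y; rewrite !mxE -(gram_side X_PSCA hn) (big_nth 1%g) big_mkord.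
  by apply: eq_bigr => j _; rewrite !mxE.
have lam_gt0 : (0 < lam%:R :> rat)%R by case: X_PSCA; rewrite ltr0n.
have : row_free (A *m A^T)%R.
  by rewrite gramA row_free_scalar_add_fibers ?mulr_ge0 ?mulr_gt0 ?ltW.
rewrite /row_free => /eqP rank_gram.
rewrite -(size_PSCA3 X_PSCA hn) -{1}rank_gram.
exact: leq_trans (mxrankM_maxl _ _) (rank_leq_col _).
Qed.
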